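(* Let $M\subset\mathbb C^{n+d}$ be a generic real submanifold through $0$ given locally by $\Re e\, w_j={}^t\bar zA_jz+O(3)$, $j=1,\dots,d$ (with $A_j$ Hermitian $n\times n$, and $z$, $\Im m\, w$ of weights one and two in the remainder), strongly Levi nondegenerate at $0$. Let $b\in\mathbb R^d$ with $\sum_jb_jA_j$ invertible and let $a\in\mathbb C^d$ be sufficiently small. If $M$ is $\mathfrak D(a)$-nondegenerate at $0$, then there exists $V\in\mathbb C^n$ such that $M$ is stationary minimal at $0$ for $(a,b-a-\overline a,V)$.
   Context: Strongly Levi nondegenerate at $0$: some real combination $\sum_jc_jA_j$ is invertible. Set $P=\sum_ja_jA_j$, $A=\sum_j(b_j-a_j-\overline{a_j})A_j$ (invertible for $a$ small) and let $X$ be the unique $n\times n$ solution with $\|X\|<1$ of $PX^2+AX+{}^t\overline P=0$. $M$ is $\mathfrak D(a)$-nondegenerate at $0$ if there exists $V\in\mathbb C^n$ such that the real $d\times d$ matrix $\Re e\big(\sum_{r=0}^\infty{}^t\overline V\,{}^t\overline X^{\,r}A_jA^{-1}A_sX^rV\big)_{j,s}$ is nondegenerate. $M$ is stationary minimal at $0$ for $(a,b-a-\overline a,V)$ if $A_1,\dots,A_d$ restricted to $\mathrm{span}_{\mathbb R}\{V,XV,X^2V,\dots\}$ are $\mathbb R$-linearly independent, i.e. $\lambda\in\mathbb R^d$ and $\sum_j\lambda_jA_jX^kV=0$ for all $k\ge0$ imply $\lambda=0$. *)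

From HB Require Import structures.
From mathcomp Require Import all_boot all_order all_algebra.
From mathcomp Require Import all_classical all_reals all_analysis.
From mathcomp Require Import complex.
Set Implicit Arguments. Unset Strict Implicit. Unset Printing Implicit Defensive.
Import Order.TTheory GRing.Theory Num.Theory.
Local Open Scope ring_scope.

Section Defs.
Variable R : realType.
Local Notation C := R[i].

Definition adjmx m p (M : 'M[C]_(m, p)) : 'M[C]_(p, m) := (map_mx (@conjc R) M)^T.

Definition hermitian_mx n (M : 'M[C]_n) : Prop := adjmx M = M.

Definition cR (x : R) : C := Complex x 0.

Definition cre (z : C) : R := complex.Re z.
Definition cim (z : C) : R := complex.Im z.

Definition rcomb n d (A : 'I_d -> 'M[C]_n) (c : 'I_d -> R) : 'M[C]_n :=
  \sum_(j < d) cR (c j) *: A j.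

Definition ccomb n d (A : 'I_d -> 'M[C]_n) (a : 'I_d -> C) : 'M[C]_n :=
  \sum_(j < d) a j *: A j.

Definition strongly_Levi_nondeg n d (A : 'I_d -> 'M[C]_n) : Prop :=
  exists c : 'I_d -> R, rcomb A c \in unitmx.

Definition vnorm2 n (v : 'cV[C]_n) : R :=
  \sum_(i < n) (cre (v i 0) ^+ 2 + cim (v i 0) ^+ 2).

Definition opnorm_lt1 n (X : 'M[C]_n) : Prop :=
  exists c : R, 0 <= c /\ c < 1 /\
    forall v : 'cV[C]_n, vnorm2 (X *m v) <= c ^+ 2 * vnorm2 v.

Definition Pmat n d (A : 'I_d -> 'M[C]_n) (a : 'I_d -> C) := ccomb A a.
Definition Amat n d (A : 'I_d -> 'M[C]_n) (a : 'I_d -> C) (b : 'I_d -> R) :=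
  ccomb A (fun j => cR (b j) - a j - conjc (a j)).

Definition solves_quad n (P Am X : 'M[C]_n) : Prop :=
  P *m (X *m X) + Am *m X + adjmx P = 0.

Definition Dmatrix n d (A : 'I_d -> 'M[C]_n) (Am X : 'M[C]_n) (V : 'cV[C]_n)
  : 'M[R]_d :=
  \matrix_(j < d, s < d)
    limn (fun N : nat => \sum_(0 <= r < N)
       cre ((adjmx V *m adjmx (X ^+ r) *m A j *m invmx Am *m A s *m (X ^+ r) *m V)
             ord0 ord0)).

Definition Da_nondegenerate n d (A : 'I_d -> 'M[C]_n) (Am X : 'M[C]_n) : Prop :=
  exists V : 'cV[C]_n, Dmatrix A Am X V \in unitmx.

Definition stationary_minimal n d (A : 'I_d -> 'M[C]_n) (X : 'M[C]_n)
  (V : 'cV[C]_n) : Prop :=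
  forall lam : 'I_d -> R,
    (forall k : nat, \sum_(j < d) cR (lam j) *: (A j *m (X ^+ k) *m V) = 0) ->
    forall j, lam j = 0.

End Defs.

From HB Require Import structures.
From mathcomp Require Import all_boot all_order all_algebra.
From mathcomp Require Import all_classical all_reals all_analysis.
From mathcomp Require Import complex.
From mathcomp Require Import ring lra.
Set Implicit Arguments. Unset Strict Implicit. Unset Printing Implicit Defensive.
Import Order.TTheory GRing.Theory Num.Theory.
Import numFieldNormedType.Exports.
Local Open Scope ring_scope.
Local Open Scope classical_set_scope.

(* Suppose a real vector lam kills every A_j X^k V.  Pairing the j-th row of
   the D(a)-matrix at V with lam gives a series whose r-th term is
   Re(^t(bar X^r V) A_j A^{-1} (sum_s lam_s A_s X^r V)) = 0.  Since |X| < 1,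
   these series converge absolutely (comparison with a geometric series), so
   the limit commutes with the finite sum over s and D(a) lam = 0; invertibility
   of D(a) then forces lam = 0.  Once X is given, neither the hermitian
   symmetry, the Levi nondegeneracy nor the smallness of a plays any role, so
   any eps works. *)

Section ComplexSquareNorm.
Variable R : realType.
Local Notation C := R[i].

Definition sqnormc (z : C) : R := cre z ^+ 2 + cim z ^+ 2.

Lemma sqnormc_ge0 (z : C) : 0 <= sqnormc z.
Proof. by rewrite addr_ge0 // sqr_ge0. Qed.

Lemma sqnormcM (u v : C) : sqnormc (u * v) = sqnormc u * sqnormc v.
Proof. by case: u v => [u1 u2] [v1 v2]; rewrite /sqnormc /cre /cim /=; ring. Qed.

Lemma sqnormc_conjc (z : C) : sqnormc (conjc z) = sqnormc z.
Proof. by case: z => x y; rewrite /sqnormc /cre /cim /= sqrrN. Qed.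

Lemma cre_sum I (r : seq I) (P : pred I) (F : I -> C) :
  cre (\sum_(i <- r | P i) F i) = \sum_(i <- r | P i) cre (F i).
Proof. exact: (raddf_sum (@complex.Re R : Rcomplex R -> R)). Qed.

Lemma cre_cRM (l : R) (z : C) : cre (cR l * z) = l * cre z.
Proof. by case: z => x y; rewrite /cre /cR /= mul0r subr0. Qed.

Lemma norm_cre_mul_le (u w : C) : `|cre (u * w)| <= (sqnormc u + sqnormc w) / 2.
Proof.
case: u w => [u1 u2] [w1 w2]; rewrite /sqnormc /cre /cim /=.
have hm : 0 <= (u1 - w1) ^+ 2 + (u2 + w2) ^+ 2 by rewrite addr_ge0 // sqr_ge0.
have hp : 0 <= (u1 + w1) ^+ 2 + (u2 - w2) ^+ 2 by rewrite addr_ge0 // sqr_ge0.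
by rewrite ler_norml; apply/andP; split; nra.
Qed.

(* [(|m|^2 + 1) / 2] bounds [|m|] without square roots. *)
Lemma norm_cre_conjcM_le (z m w : C) :
  `|cre (conjc z * m * w)| <= (sqnormc m + 1) * (sqnormc z + sqnormc w) / 2.
Proof.
apply: le_trans (norm_cre_mul_le _ _) _; rewrite sqnormcM sqnormc_conjc.
have := sqnormc_ge0 z; have := sqnormc_ge0 m; have := sqnormc_ge0 w; nra.
Qed.

End ComplexSquareNorm.

Section QuadraticForms.
Variables (R : realType) (n : nat).
Local Notation C := R[i].

Lemma adjmxM m p q (P : 'M[C]_(m, p)) (Q : 'M[C]_(p, q)) :
  adjmx (P *m Q) = adjmx Q *m adjmx P.
Proof. by rewrite /adjmx map_mxM trmx_mul. Qed.

Lemma vnorm2_ge0 (w : 'cV[C]_n) : 0 <= vnorm2 w.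
Proof. by rewrite sumr_ge0 // => i _; apply: sqnormc_ge0. Qed.

Lemma sqnormc_le_vnorm2 (w : 'cV[C]_n) i : sqnormc (w i ord0) <= vnorm2 w.
Proof. by rewrite /vnorm2 (bigD1 i) //= lerDl sumr_ge0 // => k _; apply: sqnormc_ge0. Qed.

Lemma quadformE (w : 'cV[C]_n) (M : 'M[C]_n) :
  (adjmx w *m M *m w) ord0 ord0 =
  \sum_(k < n) \sum_(i < n) conjc (w i ord0) * M i k * w k ord0.
Proof.
rewrite mxE; apply: eq_bigr => k _; rewrite mxE big_distrl /=.
by apply: eq_bigr => i _; rewrite /adjmx !mxE.
Qed.

Definition quadform_bound (M : 'M[C]_n) : R :=
  \sum_(k < n) \sum_(i < n) (sqnormc (M i k) + 1).

Lemma quadform_bound_ge0 (M : 'M[C]_n) : 0 <= quadform_bound M.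
Proof.
by rewrite !sumr_ge0 // => k _; rewrite sumr_ge0 // => i _; rewrite addr_ge0 ?sqnormc_ge0.
Qed.

Lemma norm_cre_quadform_le (w : 'cV[C]_n) (M : 'M[C]_n) :
  `|cre ((adjmx w *m M *m w) ord0 ord0)| <= quadform_bound M * vnorm2 w.
Proof.
rewrite quadformE cre_sum mulr_suml; apply: le_trans (ler_norm_sum _ _ _) _.
apply: ler_sum => k _; rewrite cre_sum mulr_suml.
apply: le_trans (ler_norm_sum _ _ _) _; apply: ler_sum => i _.
apply: le_trans (norm_cre_conjcM_le _ _ _) _.
have := sqnormc_le_vnorm2 w i; have := sqnormc_le_vnorm2 w k.
have := sqnormc_ge0 (M i k); have := sqnormc_ge0 (w i ord0).
have := sqnormc_ge0 (w k ord0); nra.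
Qed.

Lemma vnorm2_exp_mulmx_le (X : 'M[C]_n) (c : R) :
  0 <= c -> (forall v : 'cV[C]_n, vnorm2 (X *m v) <= c ^+ 2 * vnorm2 v) ->
  forall r (V : 'cV[C]_n), vnorm2 (X ^+ r *m V) <= (c ^+ 2) ^+ r * vnorm2 V.
Proof.
move=> c0 HX; elim=> [|r IH] V; first by rewrite expr0 mul1r mul1mx.
rewrite exprS -mulmxE -mulmxA exprS -mulrA.
by apply: le_trans (HX _) _; rewrite ler_wpM2l ?sqr_ge0.
Qed.

Lemma is_cvg_series_quadform_exp (X M : 'M[C]_n) (V : 'cV[C]_n) :
  opnorm_lt1 X ->
  cvgn (series (fun r => cre ((adjmx (X ^+ r *m V) *m M *m (X ^+ r *m V)) ord0 ord0))).
Proof.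
move=> [c [c0 [c1 HX]]]; apply: normed_cvg.
have c2 : `|c ^+ 2| < 1 by rewrite ger0_norm ?sqr_ge0 // expr_lt1 // c0.
move: (is_cvg_geometric_series (a := quadform_bound M * vnorm2 V) c2).
apply: series_le_cvg => r.
- exact: normr_ge0.
- by rewrite /geometric /= !mulr_ge0 ?exprn_ge0 ?sqr_ge0 ?quadform_bound_ge0 ?vnorm2_ge0.
apply: le_trans (norm_cre_quadform_le _ _) _.
by rewrite /geometric /= -mulrA ler_wpM2l ?quadform_bound_ge0 // mulrC vnorm2_exp_mulmx_le.
Qed.

End QuadraticForms.

Section DMatrix.
Variables (R : realType) (n d : nat) (A : 'I_d -> 'M[R[i]]_n) (Am X : 'M[R[i]]_n).
Variable V : 'cV[R[i]]_n.
Hypothesis HX : opnorm_lt1 X.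

Let D_term (j s : 'I_d) (r : nat) : R :=
  cre ((adjmx (X ^+ r *m V) *m (A j *m invmx Am *m A s) *m (X ^+ r *m V)) ord0 ord0).

Lemma Dmatrix_cvg j s : series (D_term j s) @ \oo --> Dmatrix A Am X V j s.
Proof.
rewrite mxE (_ : (fun _ => _) = series (D_term j s)).
  exact: is_cvg_series_quadform_exp.
by apply/funext => N; apply: eq_bigr => r _; rewrite /D_term adjmxM !mulmxA.
Qed.

Lemma Dmatrix_mulmx_eq0 (lam : 'I_d -> R) :
  (forall k, \sum_(s < d) cR (lam s) *: (A s *m X ^+ k *m V) = 0) ->
  Dmatrix A Am X V *m (\col_s lam s) = 0.
Proof.
move=> Hlam; apply/matrixP => j k; rewrite mxE [RHS]mxE.
have Dlam : (fun N => \sum_(s < d) series (D_term j s) N * lam s) @ \oo -->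
            \sum_(s < d) Dmatrix A Am X V j s * lam s.
  apply: (@cvg_big _ _ +%R 0 xpredT add_continuous) => // s _.
  by apply: cvgMr_tmp; apply: Dmatrix_cvg.
have partial_sums0 : (fun N => \sum_(s < d) series (D_term j s) N * lam s) = fun=> 0.
  apply/funext => N; under eq_bigr do rewrite mulr_suml.
  rewrite exchange_big /=; apply: big1 => r _.
  set L := adjmx (X ^+ r *m V) *m A j *m invmx Am.
  transitivity (cre ((L *m \sum_(s < d) cR (lam s) *: (A s *m X ^+ r *m V)) ord0 ord0)).
    rewrite mulmx_sumr summxE cre_sum; apply: eq_bigr => s _.
    by rewrite -scalemxAr mxE cre_cRM mulrC /D_term /L !mulmxA.
  by rewrite Hlam mulmx0 mxE.
rewrite partial_sums0 in Dlam.
under eq_bigr do rewrite [X in _ * X]mxE.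
exact: (@cvg_unique _ (@Rhausdorff R) _ _ _ _ Dlam (cvg_cst 0)).
Qed.

End DMatrix.

Theorem lemma4p7 (R : realType) (n d : nat) (A : 'I_d -> 'M[R[i]]_n) :
  (forall j, hermitian_mx (A j)) ->
  strongly_Levi_nondeg A ->
  forall b : 'I_d -> R, rcomb A b \in unitmx ->
  exists eps : R, 0 < eps /\
    forall a : 'I_d -> R[i],
      (forall j, cre (a j) ^+ 2 + cim (a j) ^+ 2 < eps ^+ 2) ->
      forall X : 'M[R[i]]_n,
        opnorm_lt1 X ->
        solves_quad (Pmat A a) (Amat A a b) X ->
        Da_nondegenerate A (Amat A a b) X ->
        exists V : 'cV[R[i]]_n, stationary_minimal A X V.
Proof.
move=> _ _ b _; exists 1; split=> // a _ X HX _ [V HD]; exists V => lam Hlam j.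
have lam0 : \col_s lam s = 0 :> 'cV[R]_d.
  by rewrite -(mulKmx HD (\col_s lam s)) (Dmatrix_mulmx_eq0 _ HX Hlam) mulmx0.
by move/matrixP/(_ j ord0): lam0; rewrite !mxE.
Qed.
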